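(* Neither the inequality $I(a,b)>S\big(A(a,b),G(a,b)\big)$ nor the inequality $I(a,b)<S\big(A(a,b),G(a,b)\big)$ holds for all distinct positive reals $a,b$. On the other hand, for all distinct positive reals $a,b$, writing $A=A(a,b)$, $G=G(a,b)$, $I=I(a,b)$, $Q=Q(a,b)$, one has $$S(Q,G)>A>I\qquad\text{and}\qquad I(Q,G)<A.$$
   Context: For positive reals $x,y$: $A(x,y)=\frac{x+y}{2}$, $G(x,y)=\sqrt{xy}$, root square mean $Q(x,y)=\sqrt{(x^2+y^2)/2}$, $S(x,y)=(x^xy^y)^{1/(x+y)}$, and for $x\neq y$ the identric mean $I(x,y)=\frac{1}{e}\left(\frac{x^x}{y^y}\right)^{1/(x-y)}$. *)

From Stdlib Require Import Reals.
Open Scope R_scope.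

Definition Amean (x y : R) : R := (x + y) / 2.
Definition Gmean (x y : R) : R := sqrt (x * y).
Definition Qmean (x y : R) : R := sqrt ((x ^ 2 + y ^ 2) / 2).
Definition Smean (x y : R) : R :=
  Rpower (Rpower x x * Rpower y y) (/ (x + y)).
Definition Imean (x y : R) : R :=
  / exp 1 * Rpower (Rpower x x / Rpower y y) (/ (x - y)).

From Stdlib Require Import Reals Lra.
From Coquelicot Require Import Coquelicot.
Open Scope R_scope.

(* In logarithmic form, ln S(x, y) = (x ln x + y ln y) / (x + y), and
   ln I(a, b) = (b ln b - a ln a) / (b - a) - 1 is the mean value of ln on
   [a, b], so I < A is the Hermite-Hadamard inequality for the concave ln.
   Since Q(Q(a, b), G(a, b)) = A(a, b) and A <= Q, the other two inequalities
   follow from I < A applied to (Q, G) and from S(x, y) > Q(x, y).  By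
   homogeneity the latter reduces to p ln p + q ln q > 0 when p^2 + q^2 = 2 and
   p <> q, i.e. to h(1 + y) + h(1 - y) > 2 h(1) for h(z) = sqrt z * ln z and
   0 < y < 1.  The function h is neither convex nor concave, but
   h''(1 + y) + h''(1 - y) > 0, which is enough.  The two universal
   comparisons of I with S(A, G) are refuted by (a, b) = (2, 2048) and (1, 9). *)

(** * Elementary bounds for exp and ln *)

Lemma exp_INR_mul n x : exp (INR n * x) = exp x ^ n.
Proof.
  rewrite <- Rpower_pow by apply exp_pos.
  unfold Rpower. rewrite ln_exp. reflexivity.
Qed.

Lemma exp_lt_inv_1_sub x : 0 < x < 1 -> exp x < / (1 - x).
Proof.
  intros Hx.
  assert (Hneg : 1 - x < exp (- x)) by (apply exp_ineq1; lra).
  assert (Hprod : exp x * exp (- x) = 1)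
    by (rewrite <- exp_plus, Rplus_opp_r; apply exp_0).
  assert (Hpos := exp_pos x).
  apply Rmult_lt_reg_r with (1 - x); [lra|].
  rewrite Rinv_l by lra. nra.
Qed.

Lemma ln_lt_sub_1 z : 0 < z -> z <> 1 -> ln z < z - 1.
Proof.
  intros Hz Hz1.
  assert (H := exp_ineq1 (ln z) (ln_neq_0 z Hz1 Hz)).
  rewrite exp_ln in H; lra.
Qed.

Lemma ln_2_lt_3_4 : ln 2 < 3 / 4.
Proof.
  rewrite <- (ln_exp (3 / 4)). apply ln_increasing; [lra|].
  replace (3 / 4) with (INR 6 * (1 / 8)) by (simpl; lra).
  rewrite exp_INR_mul.
  assert (H := exp_ineq1 (1 / 8) ltac:(lra)).
  apply Rlt_le_trans with ((1 + 1 / 8) ^ 6); [simpl; lra|].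
  apply pow_incr; lra.
Qed.

Lemma exp_8_5_lt : exp (8 / 5) < 27 / 5.
Proof.
  replace (8 / 5) with (INR 32 * (1 / 20)) by (simpl; lra).
  rewrite exp_INR_mul.
  assert (H := exp_lt_inv_1_sub (1 / 20) ltac:(lra)).
  assert (Hpos := exp_pos (1 / 20)).
  apply Rle_lt_trans with ((/ (1 - 1 / 20)) ^ 32); [apply pow_incr; lra|].
  simpl; lra.
Qed.

(** * Algebra of the means *)

Lemma Smean_exp x y : 0 < x -> 0 < y ->
  Smean x y = exp ((x * ln x + y * ln y) / (x + y)).
Proof.
  intros Hx Hy. unfold Smean, Rpower.
  rewrite <- exp_plus, ln_exp. f_equal. field. lra.
Qed.

Lemma Imean_exp a b : 0 < a -> 0 < b -> a <> b ->
  Imean a b = exp ((a * ln a - b * ln b) / (a - b) - 1).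
Proof.
  intros Ha Hb Hab. unfold Imean, Rpower.
  rewrite ln_div by apply exp_pos. rewrite !ln_exp.
  rewrite <- exp_Ropp, <- exp_plus. f_equal. field. lra.
Qed.

Lemma Imean_comm a b : 0 < a -> 0 < b -> a <> b -> Imean a b = Imean b a.
Proof.
  intros Ha Hb Hab. rewrite !Imean_exp by auto.
  f_equal. field. lra.
Qed.

Lemma Smean_scale k x y : 0 < k -> 0 < x -> 0 < y ->
  Smean (k * x) (k * y) = k * Smean x y.
Proof.
  intros Hk Hx Hy. rewrite !Smean_exp by nra.
  rewrite !ln_mult by lra.
  transitivity (exp (ln k + (x * ln x + y * ln y) / (x + y))).
  - f_equal. field. split; nra.
  - rewrite exp_plus, exp_ln by lra. reflexivity.
Qed.

Lemma one_lt_Smean p q : 0 < p -> 0 < q ->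
  0 < p * ln p + q * ln q -> 1 < Smean p q.
Proof.
  intros Hp Hq H. rewrite Smean_exp by auto. rewrite <- exp_0.
  apply exp_increasing. apply Rdiv_lt_0_compat; lra.
Qed.

Lemma Gmean_pos a b : 0 < a -> 0 < b -> 0 < Gmean a b.
Proof. intros Ha Hb. apply sqrt_lt_R0. nra. Qed.

Lemma Qmean_pos a b : 0 < a -> 0 < b -> 0 < Qmean a b.
Proof. intros Ha Hb. apply sqrt_lt_R0. simpl. nra. Qed.

Lemma Qmean_sqr a b : Qmean a b * Qmean a b = (a * a + b * b) / 2.
Proof.
  unfold Qmean. rewrite sqrt_sqrt; simpl.
  - field.
  - nra.
Qed.

Lemma Gmean_sqr a b : 0 < a -> 0 < b -> Gmean a b * Gmean a b = a * b.
Proof. intros Ha Hb. unfold Gmean. rewrite sqrt_sqrt; nra. Qed.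

Lemma Gmean_lt_Qmean a b : 0 < a -> 0 < b -> a <> b -> Gmean a b < Qmean a b.
Proof.
  intros Ha Hb Hab. unfold Gmean, Qmean. apply sqrt_lt_1; simpl.
  - nra.
  - nra.
  - assert (0 < (a - b) * (a - b)) by (apply Rsqr_pos_lt; lra). nra.
Qed.

Lemma Amean_le_Qmean a b : Amean a b <= Qmean a b.
Proof.
  destruct (Rle_or_lt (Amean a b) 0) as [Hneg | Hpos].
  - assert (0 <= Qmean a b) by apply sqrt_pos. lra.
  - rewrite <- (sqrt_square (Amean a b)) by lra.
    unfold Amean, Qmean. apply sqrt_le_1_alt. simpl.
    assert (0 <= (a - b) * (a - b)) by apply Rle_0_sqr. nra.
Qed.

Lemma Qmean_Qmean_Gmean a b : 0 < a -> 0 < b ->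
  Qmean (Qmean a b) (Gmean a b) = Amean a b.
Proof.
  intros Ha Hb. unfold Qmean at 1. simpl.
  rewrite !Rmult_1_r, Qmean_sqr, Gmean_sqr by auto.
  replace (((a * a + b * b) / 2 + a * b) / 2) with (Amean a b * Amean a b)
    by (unfold Amean; field).
  apply sqrt_square. unfold Amean. lra.
Qed.

(** * Monotonicity from derivatives *)

Lemma lt_of_is_derive_pos (f f' : R -> R) a b : a < b ->
  (forall c, a <= c <= b -> is_derive f c (f' c)) ->
  (forall c, a < c < b -> 0 < f' c) -> f a < f b.
Proof.
  intros Hab Hd Hpos.
  destruct (MVT_cor2 f f' a b Hab) as [c [Hc Hmid]].
  - intros c Hc. apply is_derive_Reals. auto.
  - assert (0 < f' c) by (apply Hpos; lra). nra.
Qed.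

Lemma is_derive_reflect_sum (f f' : R -> R) c s t :
  is_derive f (c + t) (f' (c + t)) -> is_derive f (c - t) (f' (c - t)) ->
  is_derive (fun u => f (c + u) + s * f (c - u)) t (f' (c + t) - s * f' (c - t)).
Proof.
  intros Hp Hm.
  replace (f' (c + t) - s * f' (c - t))
    with (1 * f' (c + t) + s * (-1 * f' (c - t))) by ring.
  apply (is_derive_plus (fun u => f (c + u)) (fun u => s * f (c - u))).
  - apply (is_derive_comp f (fun u => c + u)); [exact Hp|].
    auto_derive; [easy | ring].
  - apply (is_derive_scal (fun u => f (c - u))).
    apply (is_derive_comp f (fun u => c - u)); [exact Hm|].
    auto_derive; [easy | ring].
Qed.

Lemma reflect_sum_gt_of_derive2_pos (f f' f'' : R -> R) c r :
  (forall x, c - r < x < c + r -> is_derive f x (f' x)) ->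
  (forall x, c - r < x < c + r -> is_derive f' x (f'' x)) ->
  (forall y, 0 < y < r -> 0 < f'' (c + y) + f'' (c - y)) ->
  forall y, 0 < y < r -> 2 * f c < f (c + y) + f (c - y).
Proof.
  intros Hd Hd2 Hpos y Hy.
  assert (Hslope : forall z, 0 < z < r -> 0 < f' (c + z) - 1 * f' (c - z)).
  { intros z Hz.
    assert (H := lt_of_is_derive_pos (fun u => f' (c + u) + (-1) * f' (c - u))
                   (fun u => f'' (c + u) - (-1) * f'' (c - u)) 0 z).
    cbv beta in H. rewrite Rplus_0_r, Rminus_0_r in H.
    enough (f' c + -1 * f' c < f' (c + z) + -1 * f' (c - z)) by lra.
    apply H; [lra | |].
    - intros u Hu. apply is_derive_reflect_sum; apply Hd2; lra.
    - intros u Hu. assert (Hu' := Hpos u ltac:(lra)). lra. }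
  assert (H := lt_of_is_derive_pos (fun u => f (c + u) + 1 * f (c - u))
                 (fun u => f' (c + u) - 1 * f' (c - u)) 0 y).
  cbv beta in H. rewrite Rplus_0_r, Rminus_0_r in H.
  enough (f c + 1 * f c < f (c + y) + 1 * f (c - y)) by lra.
  apply H; [lra | |].
  - intros u Hu. apply is_derive_reflect_sum; apply Hd; lra.
  - intros u Hu. apply Hslope. lra.
Qed.

(** * The inequality S(x, y) > Q(x, y) *)

Definition sqrt_ln (z : R) : R := sqrt z * ln z.
Definition sqrt_ln' (z : R) : R := (ln z + 2) / (2 * sqrt z).
Definition sqrt_ln'' (z : R) : R := - ln z / (4 * z * sqrt z).

Lemma is_derive_sqrt_ln z : 0 < z -> is_derive sqrt_ln z (sqrt_ln' z).
Proof.
  intros Hz. assert (Hs : 0 < sqrt z) by (apply sqrt_lt_R0; lra).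
  unfold sqrt_ln, sqrt_ln'. auto_derive.
  - repeat split; lra.
  - assert (E : sqrt z * sqrt z = z) by (apply sqrt_sqrt; lra).
    set (s := sqrt z) in *. rewrite <- E. field. lra.
Qed.

Lemma is_derive_sqrt_ln' z : 0 < z -> is_derive sqrt_ln' z (sqrt_ln'' z).
Proof.
  intros Hz. assert (Hs : 0 < sqrt z) by (apply sqrt_lt_R0; lra).
  unfold sqrt_ln', sqrt_ln''. auto_derive.
  - repeat split; lra.
  - assert (E : sqrt z * sqrt z = z) by (apply sqrt_sqrt; lra).
    set (s := sqrt z) in *. rewrite <- E. field. lra.
Qed.

(* Both terms are compared with y: ln (1 + y) < y < - ln (1 - y), while the
   denominators (1 + y)^(3/2) and (1 - y)^(3/2) lie on either side of 1. *)
Lemma sqrt_ln''_reflect_pos y : 0 < y < 1 ->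
  0 < sqrt_ln'' (1 + y) + sqrt_ln'' (1 - y).
Proof.
  intros Hy. unfold sqrt_ln''.
  assert (Hs1 : 1 < sqrt (1 + y)).
  { rewrite <- sqrt_1 at 1. apply sqrt_lt_1; lra. }
  assert (Hs2 : 0 < sqrt (1 - y) < 1).
  { split; [apply sqrt_lt_R0; lra|]. rewrite <- sqrt_1 at 2. apply sqrt_lt_1; lra. }
  assert (Hl1 : ln (1 + y) < y) by (assert (H := ln_lt_sub_1 (1 + y)); lra).
  assert (Hl2 : ln (1 - y) < - y) by (assert (H := ln_lt_sub_1 (1 - y)); lra).
  set (D1 := (1 + y) * sqrt (1 + y)). set (D2 := (1 - y) * sqrt (1 - y)).
  assert (HD1 : 1 < D1) by (unfold D1; nra).
  assert (HD2 : 0 < D2 < 1) by (unfold D2; split; nra).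
  assert (Hlt1 : ln (1 + y) / D1 < y).
  { apply Rmult_lt_reg_r with D1; [lra|].
    unfold Rdiv. rewrite Rmult_assoc, Rinv_l by lra. nra. }
  assert (Hlt2 : y < - ln (1 - y) / D2).
  { apply Rmult_lt_reg_r with D2; [lra|].
    unfold Rdiv. rewrite Rmult_assoc, Rinv_l by lra. nra. }
  replace (- ln (1 + y) / (4 * (1 + y) * sqrt (1 + y))) with (- (ln (1 + y) / D1) / 4)
    by (unfold D1; field; lra).
  replace (- ln (1 - y) / (4 * (1 - y) * sqrt (1 - y))) with (- ln (1 - y) / D2 / 4)
    by (unfold D2; field; lra).
  lra.
Qed.

Lemma sqrt_ln_reflect_pos y : 0 < y < 1 ->
  0 < sqrt_ln (1 + y) + sqrt_ln (1 - y).
Proof.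
  intros Hy.
  replace 0 with (2 * sqrt_ln 1) by (unfold sqrt_ln; rewrite ln_1; ring).
  apply (reflect_sum_gt_of_derive2_pos sqrt_ln sqrt_ln' sqrt_ln'' 1 1); auto.
  - intros x Hx. apply is_derive_sqrt_ln. lra.
  - intros x Hx. apply is_derive_sqrt_ln'. lra.
  - apply sqrt_ln''_reflect_pos.
Qed.

Lemma xlnx_add_pos p q : 0 < p -> 0 < q -> p * p + q * q = 2 -> p <> q ->
  0 < p * ln p + q * ln q.
Proof.
  intros Hp Hq Hsum Hpq.
  assert (Hsym : forall u v, 0 < u -> 0 < v -> u * u + v * v = 2 -> v < u ->
                 0 < u * ln u + v * ln v).
  { intros u v Hu Hv Huv Hvu.
    assert (H := sqrt_ln_reflect_pos (u * u - 1) ltac:(nra)).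
    unfold sqrt_ln in H.
    replace (1 + (u * u - 1)) with (u * u) in H by ring.
    replace (1 - (u * u - 1)) with (v * v) in H by lra.
    rewrite !sqrt_square, !ln_mult in H by lra. lra. }
  destruct (Rlt_or_le q p).
  - apply Hsym; auto.
  - rewrite Rplus_comm. apply Hsym; lra.
Qed.

Lemma Qmean_lt_Smean x y : 0 < x -> 0 < y -> x <> y -> Qmean x y < Smean x y.
Proof.
  intros Hx Hy Hxy.
  set (m := Qmean x y).
  assert (Hm : 0 < m) by (apply Qmean_pos; auto).
  assert (Hsq := Qmean_sqr x y). fold m in Hsq.
  replace (Smean x y) with (m * Smean (x / m) (y / m)).
  - assert (1 < Smean (x / m) (y / m)).
    { apply one_lt_Smean; try (apply Rdiv_lt_0_compat; lra).
      apply xlnx_add_pos; try (apply Rdiv_lt_0_compat; lra).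
      - replace (x / m * (x / m) + y / m * (y / m)) with ((x * x + y * y) / (m * m))
          by (field; lra).
        rewrite Hsq. field. nra.
      - intro E. apply Hxy.
        replace x with (m * (x / m)) by (field; lra). rewrite E. field. lra. }
    nra.
  - rewrite <- Smean_scale by (try apply Rdiv_lt_0_compat; lra).
    f_equal; field; lra.
Qed.

(** * The inequality I < A *)

(* The left-hand side is the integral of ln over [a, b]; this is the
   Hermite-Hadamard inequality for the concave function ln. *)
Lemma integral_ln_lt_ln_midpoint a b : 0 < a < b ->
  b * ln b - a * ln a - (b - a) < (b - a) * ln ((a + b) / 2).
Proof.
  intros Hab.
  set (phi := fun y => (y - a) * ln ((a + y) / 2) - (y * ln y - a * ln a - (y - a))).
  set (phi' := fun y => ln ((a + y) / 2) + (y - a) / (a + y) - ln y).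
  assert (Hlt : phi a < phi b).
  { apply (lt_of_is_derive_pos phi phi' a b); [lra | |].
    - intros c Hc. unfold phi, phi'. auto_derive.
      + repeat split; lra.
      + unfold Rdiv. field. lra.
    - intros c Hc. unfold phi'.
      assert (Hm : 0 < (a + c) / 2) by lra.
      assert (H : ln (c / ((a + c) / 2)) < c / ((a + c) / 2) - 1).
      { apply ln_lt_sub_1; [apply Rdiv_lt_0_compat; lra|].
        intro E. apply Rdiv_diag_uniq in E; lra. }
      rewrite ln_div in H by lra.
      replace (c / ((a + c) / 2) - 1) with ((c - a) / (a + c)) in H by (field; lra).
      lra. }
  unfold phi in Hlt. lra.
Qed.

Lemma Imean_lt_Amean a b : 0 < a -> 0 < b -> a <> b -> Imean a b < Amean a b.
Proof.
  intros Ha Hb Hab.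
  assert (Hord : forall u v, 0 < u < v -> Imean u v < Amean u v).
  { intros u v Huv. rewrite Imean_exp by lra. unfold Amean.
    rewrite <- (exp_ln ((u + v) / 2)) by lra. apply exp_increasing.
    assert (H := integral_ln_lt_ln_midpoint u v Huv).
    apply Rmult_lt_reg_r with (v - u); [lra|].
    replace (((u * ln u - v * ln v) / (u - v) - 1) * (v - u))
      with (v * ln v - u * ln u - (v - u)) by (field; lra).
    lra. }
  destruct (Rlt_or_le a b).
  - apply Hord. lra.
  - rewrite Imean_comm by auto. unfold Amean. rewrite Rplus_comm. apply Hord. lra.
Qed.

(** * Counterexamples *)

(* With (a, b) = (2, 2^11) we get G = 2^6 and A = 1025 > 2^10, so every
   logarithm involved is bounded in terms of ln 2. *)
Lemma Imean_lt_Smean_Amean_Gmean_2_2048 :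
  Imean 2 2048 < Smean (Amean 2 2048) (Gmean 2 2048).
Proof.
  assert (HA : Amean 2 2048 = 1025) by (unfold Amean; lra).
  assert (HG : Gmean 2 2048 = 64).
  { unfold Gmean. replace (2 * 2048) with (64 * 64) by lra.
    apply sqrt_square. lra. }
  rewrite HA, HG, Imean_exp, Smean_exp by lra. apply exp_increasing.
  assert (Hln2048 : ln 2048 = 11 * ln 2).
  { replace 2048 with (2 ^ 11) by (simpl; lra). rewrite ln_pow by lra. simpl; lra. }
  assert (Hln64 : ln 64 = 6 * ln 2).
  { replace 64 with (2 ^ 6) by (simpl; lra). rewrite ln_pow by lra. simpl; lra. }
  assert (Hln1025 : 10 * ln 2 <= ln 1025).
  { replace (10 * ln 2) with (ln (2 ^ 10)) by (rewrite ln_pow by lra; simpl; lra).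
    apply ln_le; simpl; lra. }
  assert (Hln2 := ln_2_lt_3_4).
  rewrite Hln2048, Hln64.
  apply Rlt_le_trans with ((1025 * (10 * ln 2) + 64 * (6 * ln 2)) / (1025 + 64)).
  - unfold Rdiv. lra.
  - apply Rmult_le_compat_r; lra.
Qed.

(* With (a, b) = (1, 9) we get A = 5 and G = 3, and the claim reduces to
   8/5 < ln (27/5). *)
Lemma Smean_Amean_Gmean_lt_Imean_1_9 :
  Smean (Amean 1 9) (Gmean 1 9) < Imean 1 9.
Proof.
  assert (HA : Amean 1 9 = 5) by (unfold Amean; lra).
  assert (HG : Gmean 1 9 = 3).
  { unfold Gmean. replace (1 * 9) with (3 * 3) by lra.
    apply sqrt_square. lra. }
  rewrite HA, HG, Imean_exp, Smean_exp by lra. apply exp_increasing.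
  assert (Hln9 : ln 9 = 2 * ln 3).
  { replace 9 with (3 ^ 2) by (simpl; lra). rewrite ln_pow by lra. simpl; lra. }
  assert (Hln27_5 : 8 / 5 < 3 * ln 3 - ln 5).
  { replace (3 * ln 3 - ln 5) with (ln (27 / 5)).
    - rewrite <- (ln_exp (8 / 5)). apply ln_increasing; [apply exp_pos|].
      apply exp_8_5_lt.
    - rewrite ln_div by lra. replace 27 with (3 ^ 3) by (simpl; lra).
      rewrite ln_pow by lra. simpl; lra. }
  rewrite ln_1, Hln9. unfold Rdiv. lra.
Qed.

Theorem theorem4 :
  (~ (forall a b : R, 0 < a -> 0 < b -> a <> b ->
        Imean a b > Smean (Amean a b) (Gmean a b))) /\
  (~ (forall a b : R, 0 < a -> 0 < b -> a <> b ->
        Imean a b < Smean (Amean a b) (Gmean a b))) /\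
  (forall a b : R, 0 < a -> 0 < b -> a <> b ->
     Smean (Qmean a b) (Gmean a b) > Amean a b /\
     Amean a b > Imean a b /\
     Imean (Qmean a b) (Gmean a b) < Amean a b).
Proof.
  split; [|split].
  - intros H. assert (H1 := H 2 2048 ltac:(lra) ltac:(lra) ltac:(lra)).
    assert (H2 := Imean_lt_Smean_Amean_Gmean_2_2048). lra.
  - intros H. assert (H1 := H 1 9 ltac:(lra) ltac:(lra) ltac:(lra)).
    assert (H2 := Smean_Amean_Gmean_lt_Imean_1_9). lra.
  - intros a b Ha Hb Hab.
    assert (HQ := Qmean_pos a b Ha Hb).
    assert (HG := Gmean_pos a b Ha Hb).
    assert (HQG : Qmean a b <> Gmean a b).
    { assert (H := Gmean_lt_Qmean a b Ha Hb Hab). lra. }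
    rewrite <- (Qmean_Qmean_Gmean a b) at 1 3 by auto.
    split; [|split].
    + apply Qmean_lt_Smean; auto.
    + apply Imean_lt_Amean; auto.
    + apply Rlt_le_trans with (Amean (Qmean a b) (Gmean a b)).
      * apply Imean_lt_Amean; auto.
      * apply Amean_le_Qmean.
Qed.
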